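(* Fix a finite relational vocabulary $\sigma$ and integers $n,d\ge 0$. In the generalized core model structure on $\mathbf{STRUCT}[\sigma_n]_{(d,0)}^{\widetilde{\mathcal{T}(\sigma_n)}}$, any two morphisms $f,g:X\to Y$ with the same domain and the same codomain are homotopic.
   Context: Let $\sigma=\langle R_1,\dots,R_l\rangle$ be a finite relational vocabulary, $R_i$ of arity $p_i$, and $\sigma_n$ its expansion by $n$ constant symbols; all structures are finite. For a $\sigma$-structure $\mathfrak{A}$, its Gaifman graph has vertex set $A$ and an edge between $a,b$ iff both occur in a tuple of some $R_i^{\mathfrak{A}}$; $d(\cdot,\cdot)$ is shortest-path distance, $d(\vec a,b)=\min_i d(a_i,b)$, $B_d^{\mathfrak{A}}(\vec a)=\{b: d(\vec a,b)\le d\}$, and the $d$-neighborhood $N_d^{\mathfrak{A}}(\vec a)$ is the $\sigma_n$-structure on $B_d^{\mathfrak{A}}(\vec a)$ with relations $R_i^{\mathfrak{A}}\cap B_d^{\mathfrak{A}}(\vec a)^{p_i}$ and constants $a_1,\dots,a_n$. Homomorphisms of $d$-neighborhoods are relation-preserving maps of balls sending $a_i\mapsto b_i$. $\widetilde{\mathcal{T}(\sigma_n)}$ is the $\sigma_n$-structure whose universe is the set of closed $\sigma_n$-terms (the constant symbols), constants interpreted as themselves and all relations empty. The category $\mathbf{STRUCT}[\sigma_n]_{(d,0)}^{\widetilde{\mathcal{T}(\sigma_n)}}$ has objects the $d$-neighborhoods $N_d^{\mathfrak{A}}(\vec a)$, the $0$-neighborhoods $N_0^{\mathfrak{A}}(a)$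 and $\widetilde{\mathcal{T}(\sigma_n)}$; morphisms are homomorphisms of $d$-neighborhoods, the unique homomorphism $\widetilde{\mathcal{T}(\sigma_n)}\to N_d^{\mathfrak{A}}(\vec a)$, and the unique homomorphism $N_d^{\mathfrak{A}}(\vec a)\to N_0^{\mathfrak{A}}(a)$. Two objects are homomorphically equivalent if there are morphisms in both directions. The generalized core model structure (of Droz and Zakharevich) is the model structure in which a morphism $f:X\to Y$ is a weak equivalence iff $X$ and $Y$ are homomorphically equivalent, and the acyclic fibrations are exactly the retractions (morphisms $r$ with $r\circ s=\mathrm{id}$ for some $s$); cofibrations are the morphisms with the left lifting property w.r.t. retractions and fibrations those with the right lifting property w.r.t. acyclic cofibrations. ''Homotopic'' refers to left (equivalently right) homotopy in this model structure. *)

From mathcomp Require Import all_boot.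
Set Implicit Arguments.
Unset Strict Implicit.
Unset Printing Implicit Defensive.

Record vocab := Vocab { nrel : nat; arity : 'I_nrel -> nat }.

Record structure (sg : vocab) := Struct {
  carrier :> finType;
  rel : forall i : 'I_(nrel sg), pred ((arity i).-tuple carrier) }.
Arguments rel {sg} s i _.

(* A finite sigma_n-structure (sigma expanded by n constant symbols). *)
Record sstruct (sg : vocab) (n : nat) := SStruct {
  scar :> finType;
  srel : forall i : 'I_(nrel sg), pred ((arity i).-tuple scar);
  scst : n.-tuple scar }.
Arguments srel {sg n} s i _.
Arguments scst {sg n} s.

Definition is_hom (sg : vocab) (n : nat) (X Y : sstruct sg n) (f : X -> Y) : Prop :=
  (forall j : 'I_n, f (tnth (scst X) j) = tnth (scst Y) j) /\
  (forall (i : 'I_(nrel sg)) (t : (arity i).-tuple X),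
      srel X i t -> srel Y i (map_tuple f t)).

Section Gaifman.
Variables (sg : vocab) (A : structure sg).

Definition gadj (a b : A) : bool :=
  [exists i : 'I_(nrel sg), exists t : (arity i).-tuple A,
      [&& rel A i t, a \in t & b \in t]].

(* inball k c x  <=>  d(c, x) <= k  (distance in the Gaifman graph). *)
Fixpoint inball (k : nat) (c : seq A) (x : A) : bool :=
  match k with
  | 0 => x \in c
  | k'.+1 => inball k' c x || [exists y, inball k' c y && gadj y x]
  end.

Lemma inball_mem k (c : seq A) x : x \in c -> inball k c x.
Proof. by elim: k => [|k IH] //= H; rewrite IH. Qed.
End Gaifman.

Section Objects.
Variables (sg : vocab) (n d : nat).

Definition ballT (A : structure sg) (a : n.-tuple A) : finType :=
  {x : A | inball d a x}.

Definition nbhd (A : structure sg) (a : n.-tuple A) : sstruct sg n :=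
  @SStruct sg n (ballT a)
    (fun i t => rel A i (map_tuple val t))
    [tuple (exist _ (tnth a j) (inball_mem d (mem_tnth j a)) : ballT a) | j < n].

Definition pointT (A : structure sg) (x : A) : finType := {y : A | y == x}.

Definition nbhd0 (A : structure sg) (x : A) : sstruct sg n :=
  @SStruct sg n (pointT x)
    (fun i t => rel A i (map_tuple val t))
    [tuple (exist _ x (eqxx x) : pointT x) | j < n].

(* The term structure T(sigma_n)~: universe = the n constant symbols,
   constants interpreted as themselves, all relations empty. *)
Definition termS : sstruct sg n :=
  @SStruct sg n ('I_n : finType) (fun _ _ => false) [tuple j | j < n].

Inductive obj :=
  | Top
  | Nb (A : structure sg) (a : n.-tuple A)
  | Zr (A : structure sg) (x : A).

Definition und (X : obj) : sstruct sg n :=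
  match X with
  | Top => termS
  | Nb A a => nbhd a
  | Zr A x => nbhd0 x
  end.

(* Which kinds of arrows exist: T -> anything (the unique homomorphism),
   homomorphisms N_d -> N_d, the unique homomorphism N_d -> N_0, and
   identities (the only arrows out of / between 0-neighborhoods). *)
Definition allowed (X Y : obj) : Prop :=
  match X, Y with
  | Top, _ => True
  | Nb _ _, Nb _ _ => True
  | Nb _ _, Zr _ _ => True
  | Zr _ _, Zr _ _ => X = Y
  | _, _ => False
  end.

Definition isMor (X Y : obj) (f : und X -> und Y) : Prop :=
  allowed X Y /\ is_hom f.

Definition weq (X Y : obj) (f : und X -> und Y) : Prop :=
  exists g : und Y -> und X, isMor g.

(* retractions = acyclic fibrations *)
Definition retraction (X Y : obj) (r : und X -> und Y) : Prop :=
  exists s : und Y -> und X, isMor s /\ forall y, r (s y) = y.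

Definition cofibration (X Y : obj) (c : und X -> und Y) : Prop :=
  forall (E B : obj) (r : und E -> und B) (u : und X -> und E) (v : und Y -> und B),
    isMor r -> retraction r -> isMor u -> isMor v ->
    (forall x, r (u x) = v (c x)) ->
    exists h : und Y -> und E, isMor h /\
      (forall x, h (c x) = u x) /\ (forall y, r (h y) = v y).

Definition fibration (X Y : obj) (q : und X -> und Y) : Prop :=
  forall (E B : obj) (c : und E -> und B) (u : und E -> und X) (v : und B -> und Y),
    isMor c -> cofibration c -> weq c -> isMor u -> isMor v ->
    (forall e, q (u e) = v (c e)) ->
    exists h : und B -> und X, isMor h /\
      (forall e, h (c e) = u e) /\ (forall b, q (h b) = v b).

(* The map [i0, i1] : X + X -> C is a cofibration, phrased without coproducts:
   joint left lifting property with respect to retractions. *)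
Definition jointly_cofibration (X C : obj) (i0 i1 : und X -> und C) : Prop :=
  forall (E B : obj) (r : und E -> und B) (u0 u1 : und X -> und E) (v : und C -> und B),
    isMor r -> retraction r -> isMor u0 -> isMor u1 -> isMor v ->
    (forall x, r (u0 x) = v (i0 x)) -> (forall x, r (u1 x) = v (i1 x)) ->
    exists h : und C -> und E, isMor h /\
      (forall x, h (i0 x) = u0 x) /\ (forall x, h (i1 x) = u1 x) /\
      (forall c, r (h c) = v c).

(* Left homotopy via a cylinder object X + X -> C -> X
   (cofibration followed by a weak equivalence, composite = fold map). *)
Definition left_homotopic (X Y : obj) (f g : und X -> und Y) : Prop :=
  exists (C : obj) (i0 i1 : und X -> und C) (p : und C -> und X) (H : und C -> und Y),
    isMor i0 /\ isMor i1 /\ isMor p /\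
    (forall x, p (i0 x) = x) /\ (forall x, p (i1 x) = x) /\
    weq p /\ jointly_cofibration i0 i1 /\
    isMor H /\ (forall x, H (i0 x) = f x) /\ (forall x, H (i1 x) = g x).

End Objects.

From Pilot Require Import Defs.
From mathcomp Require Import all_boot.
Set Implicit Arguments. Unset Strict Implicit. Unset Printing Implicit Defensive.

(* A morphism out of the term structure or out of a 0-neighbourhood is unique,
   so for such X the object X itself, with both inclusions the identity, is a
   cylinder.  For X = N_d(A, a) let D be the double of A: two copies of A glued
   along the constants a.  Then C = N_d(D, a) is the union of two copies of X
   (the second copy of a constant is the first one, so no other point of D is
   reachable from a), and a pair of morphisms out of X agreeing on the
   constants, as all pairs do, glues to a morphism out of C.  Hence C is a
   coproduct X + X, the codiagonal C -> X is a weak equivalence (it is split by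
   either inclusion), [i0, i1] lifts against every map, and [f, g] : C -> Y is
   a left homotopy from f to g. *)

Section TupleMaps.
Variables (m : nat) (T U V : Type).

Lemma map_tuple_id (t : m.-tuple T) : map_tuple id t = t.
Proof. by apply: val_inj; rewrite /= map_id. Qed.

Lemma map_tuple_comp (f : U -> V) (g : T -> U) (t : m.-tuple T) :
  map_tuple f (map_tuple g t) = map_tuple (f \o g) t.
Proof. by apply: val_inj; rewrite /= map_comp. Qed.

Lemma eq_in_map_tuple (S : eqType) (f g : S -> U) (t : m.-tuple S) :
  {in t, f =1 g} -> map_tuple f t = map_tuple g t.
Proof. by move=> fg; apply: val_inj; exact/eq_in_map. Qed.

End TupleMaps.

Lemma is_hom_id sg n (X : sstruct sg n) : is_hom (@id X).
Proof. by split=> // i t; rewrite map_tuple_id. Qed.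

Lemma isMor_id sg n d (X : obj sg n) : isMor (@id (und d X)).
Proof. by split; [case: X | exact: is_hom_id]. Qed.

Section CylinderCriterion.
Variables (sg : vocab) (n d : nat).
Implicit Types X C E : obj sg n.

Definition weak_coproduct X C (i0 i1 : und d X -> und d C) : Prop :=
  forall E (u0 u1 : und d X -> und d E), isMor u0 -> isMor u1 ->
    exists h : und d C -> und d E,
      [/\ isMor h, forall x, h (i0 x) = u0 x & forall x, h (i1 x) = u1 x].

Definition jointly_surjective X C (i0 i1 : und d X -> und d C) : Prop :=
  forall z, exists x, z = i0 x \/ z = i1 x.

Variables (X C : obj sg n) (i0 i1 : und d X -> und d C).
Hypotheses (cop : weak_coproduct i0 i1) (surj : jointly_surjective i0 i1).

Lemma jointly_cofibration_of_coproduct : jointly_cofibration i0 i1.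
Proof.
move=> E B r u0 u1 v _ _ u0M u1M _ ru0 ru1.
have [h [hM hi0 hi1]] := cop u0M u1M.
exists h; split=> //; do 2!split=> //.
by move=> z; have [x [->|->]] := surj z; rewrite ?hi0 ?hi1.
Qed.

Lemma left_homotopic_of_coproduct (Y : obj sg n) (f g : und d X -> und d Y) :
  isMor i0 -> isMor i1 -> isMor f -> isMor g -> left_homotopic f g.
Proof.
move=> i0M i1M fM gM.
have [p [pM pi0 pi1]] := cop (isMor_id d X) (isMor_id d X).
have [H [HM Hi0 Hi1]] := cop fM gM.
have weq_p : weq p by exists i0.
have cof_i := jointly_cofibration_of_coproduct.
by exists C, i0, i1, p, H; do 9!split=> //.
Qed.

End CylinderCriterion.

Lemma left_homotopic_of_unique_maps sg n d (X Y : obj sg n)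
    (f g : und d X -> und d Y) :
  (forall E (u0 u1 : und d X -> und d E), isMor u0 -> isMor u1 -> u0 =1 u1) ->
  isMor f -> isMor g -> left_homotopic f g.
Proof.
move=> uniq; apply: (left_homotopic_of_coproduct (i0 := id) (i1 := id)).
- by move=> E u0 u1 u0M u1M; exists u0; split=> // x; exact: uniq.
- by move=> z; exists z; left.
- exact: isMor_id.
- exact: isMor_id.
Qed.

Lemma Top_maps_unique sg n d E (u0 u1 : und d (Top sg n) -> und d E) :
  isMor u0 -> isMor u1 -> u0 =1 u1.
Proof.
move=> [_ [u0c _]] [_ [u1c _]] j.
by have := u0c j; have := u1c j; rewrite /= tnth_mktuple => -> ->.
Qed.

Lemma Zr_maps_unique sg n d (A : structure sg) (x : A) E
    (u0 u1 : und d (Zr n x) -> und d E) :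
  isMor u0 -> isMor u1 -> u0 =1 u1.
Proof.
case: E u0 u1 => [|B b|B y] u0 u1 [allowed_E _] // _ z.
by apply: val_inj; rewrite (eqP (valP (u0 z))) (eqP (valP (u1 z))).
Qed.

Lemma inball_map sg (A B : structure sg) (phi : A -> B) :
  (forall i t, Defs.rel A i t -> Defs.rel B i (map_tuple phi t)) ->
  forall k (c : seq A) x, inball k c x -> inball k (map phi c) (phi x).
Proof.
move=> phi_rel; elim=> [|k IHk] c x /=; first exact: map_f.
case/orP=> [x_in|/existsP[y /andP[y_in /existsP[i /existsP[t /and3P[Rt yt xt]]]]]].
  by rewrite IHk.
apply/orP; right; apply/existsP; exists (phi y); rewrite IHk //=.
apply/existsP; exists i; apply/existsP; exists (map_tuple phi t).
by rewrite phi_rel //= !map_f.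
Qed.

Section Double.
Variables (sg : vocab) (A : structure sg) (c : seq A).

Definition dinr (x : A) : A + A := if x \in c then inl x else inr x.

Definition double_rel i (t : (arity i).-tuple (A + A)) : bool :=
  [exists s : (arity i).-tuple A,
     Defs.rel A i s && ((t == map_tuple inl s) || (t == map_tuple dinr s))].

Definition double : structure sg := @Struct sg (A + A)%type double_rel.

Definition dfold (z : A + A) : A := match z with inl x | inr x => x end.

Lemma dfold_dinr x : dfold (dinr x) = x.
Proof. by rewrite /dinr; case: ifP. Qed.

Lemma map_dinr : map dinr c = map inl c.
Proof. by apply/eq_in_map => x xc; rewrite /dinr xc. Qed.

Lemma double_rel_inl i t : Defs.rel A i t -> Defs.rel double i (map_tuple inl t).
Proof. by move=> Rt; apply/existsP; exists t; rewrite Rt eqxx. Qed.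

Lemma double_rel_dinr i t : Defs.rel A i t -> Defs.rel double i (map_tuple dinr t).
Proof. by move=> Rt; apply/existsP; exists t; rewrite Rt eqxx orbT. Qed.

Lemma double_rel_dfold i t : Defs.rel double i t -> Defs.rel A i (map_tuple dfold t).
Proof.
case/existsP=> s /andP[Rs /orP[]] /eqP ->; rewrite map_tuple_comp.
  by rewrite map_tuple_id.
by rewrite (eq_in_map_tuple (g := id)) ?map_tuple_id // => x _; exact: dfold_dinr.
Qed.

(* The second copy of a point of [c] is [inl] of it, so [inr x] is isolated. *)
Lemma inr_notin_ball k x :
  x \in c -> ~~ inball k (map inl c : seq double) (inr x).
Proof.
move=> xc; elim: k => [|k IHk] /=; first by apply/mapP => -[].
rewrite negb_or IHk; apply/existsP => -[y /andP[_ /existsP[i /existsP[t]]]].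
case/and3P=> /existsP[s /andP[_ /orP[] /eqP ->]] _ /mapP[z _] //.
by rewrite /dinr; case: ifP => // zc [ezx]; rewrite -ezx xc in zc.
Qed.

End Double.

Section Cylinder.
Variables (sg : vocab) (n d : nat) (A : structure sg) (a : n.-tuple A).

Definition cyl_constants : n.-tuple (double a) := map_tuple inl a.

Local Notation X := (nbhd d a).
Local Notation C := (nbhd d cyl_constants).

Lemma inball_cyl_i0 (x : X) :
  inball d (cyl_constants : seq (double a)) (inl (val x)).
Proof. exact: inball_map (@double_rel_inl _ _ _) _ _ _ (valP x). Qed.

Lemma inball_cyl_i1 (x : X) :
  inball d (cyl_constants : seq (double a)) (dinr a (val x)).
Proof.
by rewrite /= -map_dinr; exact: inball_map (@double_rel_dinr _ _ _) _ _ _ (valP x).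
Qed.

Lemma inball_cyl_fold (z : C) : inball d (a : seq A) (dfold (val z)).
Proof.
have /= := inball_map (@double_rel_dfold _ _ _) (valP z).
by rewrite -map_comp map_id.
Qed.

Definition cyl_i0 (x : X) : C := exist _ (inl (val x)) (inball_cyl_i0 x).
Definition cyl_i1 (x : X) : C := exist _ (dinr a (val x)) (inball_cyl_i1 x).
Definition cyl_fold (z : C) : X := exist _ (dfold (val z)) (inball_cyl_fold z).

Lemma cyl_fold_i0 x : cyl_fold (cyl_i0 x) = x.
Proof. exact: val_inj. Qed.

Lemma cyl_fold_i1 x : cyl_fold (cyl_i1 x) = x.
Proof. by apply: val_inj; rewrite /= dfold_dinr. Qed.

Lemma cyl_cover (z : C) : z = cyl_i0 (cyl_fold z) \/ z = cyl_i1 (cyl_fold z).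
Proof.
case: z => [[y|y] yin]; [left | right]; apply: val_inj => //=.
rewrite /dinr; case: ifP => // ya.
by move: (inr_notin_ball d ya); rewrite yin.
Qed.

Lemma cyl_i0_hom : is_hom cyl_i0.
Proof.
split=> [j|i t Rt]; first by apply: val_inj; rewrite /= !tnth_mktuple /= tnth_map.
by move: (double_rel_inl a Rt); rewrite /= !map_tuple_comp.
Qed.

Lemma cyl_i1_hom : is_hom cyl_i1.
Proof.
split=> [j|i t Rt].
  by apply: val_inj; rewrite /= !tnth_mktuple /= tnth_map /dinr mem_tnth.
by move: (double_rel_dinr a Rt); rewrite /= !map_tuple_comp.
Qed.

Lemma cyl_fold_hom : is_hom cyl_fold.
Proof.
split=> [j|i t Rt]; first by apply: val_inj; rewrite /= !tnth_mktuple /= tnth_map.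
by move: (double_rel_dfold Rt); rewrite /= !map_tuple_comp.
Qed.

Lemma hom_eq_constants (W : sstruct sg n) (p q : X -> W) :
  is_hom p -> is_hom q -> forall x : X, val x \in (a : seq A) -> p x = q x.
Proof.
move=> [pc _] [qc _] x /tnthP[j xj].
have -> : x = tnth (scst X) j by apply: val_inj; rewrite /= tnth_mktuple.
by rewrite pc qc.
Qed.

Definition cyl_copair (W : sstruct sg n) (p q : X -> W) (z : C) : W :=
  if val z is inl _ then p (cyl_fold z) else q (cyl_fold z).

Section Copair.
Variables (W : sstruct sg n) (p q : X -> W).
Hypotheses (p_hom : is_hom p) (q_hom : is_hom q).

Lemma cyl_copair_inl z y : val z = inl y -> cyl_copair p q z = p (cyl_fold z).
Proof. by rewrite /cyl_copair => ->. Qed.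

Lemma cyl_copair_dinr z y : val z = dinr a y -> cyl_copair p q z = q (cyl_fold z).
Proof.
move=> zy; rewrite /cyl_copair zy /dinr; case: ifP => // ya.
by apply: hom_eq_constants; rewrite //= zy dfold_dinr.
Qed.

Lemma cyl_copair_i0 x : cyl_copair p q (cyl_i0 x) = p x.
Proof. by rewrite (@cyl_copair_inl (cyl_i0 x) (val x)) // cyl_fold_i0. Qed.

Lemma cyl_copair_i1 x : cyl_copair p q (cyl_i1 x) = q x.
Proof. by rewrite (@cyl_copair_dinr (cyl_i1 x) (val x)) // cyl_fold_i1. Qed.

Lemma cyl_copair_hom : is_hom (cyl_copair p q).
Proof.
split=> [j|i t].
  have -> : tnth (scst C) j = cyl_i0 (tnth (scst X) j) by case: cyl_i0_hom => ->.
  by rewrite cyl_copair_i0; case: p_hom.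
move=> Rt; have Rft := cyl_fold_hom.2 i t Rt.
case/existsP: Rt => s /andP[_ /orP[] /eqP/(congr1 val) /= ts].
  suff -> : map_tuple (cyl_copair p q) t = map_tuple p (map_tuple cyl_fold t).
    exact: p_hom.2.
  rewrite map_tuple_comp; apply: eq_in_map_tuple => z /(map_f val).
  by rewrite ts => /mapP[y _ /cyl_copair_inl].
suff -> : map_tuple (cyl_copair p q) t = map_tuple q (map_tuple cyl_fold t).
  exact: q_hom.2.
rewrite map_tuple_comp; apply: eq_in_map_tuple => z /(map_f val).
by rewrite ts => /mapP[y _ /cyl_copair_dinr].
Qed.

End Copair.

Lemma cyl_weak_coproduct :
  @weak_coproduct sg n d (Nb a) (Nb cyl_constants) cyl_i0 cyl_i1.
Proof.
move=> E u0 u1 [u0A u0H] [_ u1H]; exists (cyl_copair u0 u1); split.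
- by split; [case: E u0 u1 u0A {u0H u1H} | exact: cyl_copair_hom].
- exact: cyl_copair_i0.
- exact: cyl_copair_i1.
Qed.

Lemma cyl_jointly_surjective :
  @jointly_surjective sg n d (Nb a) (Nb cyl_constants) cyl_i0 cyl_i1.
Proof. by move=> z; exists (cyl_fold z); exact: cyl_cover. Qed.

End Cylinder.

Theorem proposition10 (sg : vocab) (n d : nat) (X Y : obj sg n)
    (f g : und d X -> und d Y) :
  isMor f -> isMor g -> left_homotopic f g.
Proof.
case: X f g => [|A a|A x] f g.
- exact/left_homotopic_of_unique_maps/Top_maps_unique.
- apply: (left_homotopic_of_coproduct (@cyl_weak_coproduct _ _ d _ a)
                                      (@cyl_jointly_surjective _ _ d _ a)).
  + by split; last exact: cyl_i0_hom.
  + by split; last exact: cyl_i1_hom.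
- exact/left_homotopic_of_unique_maps/Zr_maps_unique.
Qed.
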